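(* Let $G=(V,E)$ be an $(n-4)$-regular graph on $n>4$ nodes and let $\emptyset\ne V_i\subseteq V$ with $|V_i|=t_in$. Then $n(n-4)\,\mathsf M(V_i)\le (4t_i^2-t_i)\,n$. In particular, if $|V_i|\le n/4$ then $\mathsf M(V_i)\le 0$, and if $|V_i|=(\frac14+\delta)n$ with $\delta>0$ then $n(n-4)\mathsf M(V_i)\le(4\delta^2+\delta)n$.
   Context: For a finite simple undirected graph $G=(V,E)$ with $m=|E|\ge1$ edges, degrees $d_v$, and $a_{u,v}=1$ if $\{u,v\}\in E$ and $0$ otherwise: for $C\subseteq V$, $\mathsf M(C)=\frac{1}{2m}\sum_{u\in C}\sum_{v\in C}\big(a_{u,v}-\frac{d_ud_v}{2m}\big)$, the sum over all ordered pairs including $u=v$. *)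

From HB Require Import structures.
From mathcomp Require Import all_boot all_order all_algebra.
Set Implicit Arguments. Unset Strict Implicit. Unset Printing Implicit Defensive.
Import Order.TTheory GRing.Theory Num.Theory.
Local Open Scope ring_scope.

(* A finite simple undirected graph is a symmetric irreflexive relation
   e : rel T on a finite vertex type T. *)

Definition edges (T : finType) (e : rel T) : {set {set T}} :=
  [set A : {set T} | [exists u, exists v, e u v && (A == [set u; v])]].

Definition nedges (T : finType) (e : rel T) : nat := #|edges e|.

Definition deg (T : finType) (e : rel T) (v : T) : nat := #|[set u | e v u]|.

Definition adj (R : numFieldType) (T : finType) (e : rel T) (u v : T) : R :=
  if e u v then 1 else 0.

Definition modularity (R : numFieldType) (T : finType) (e : rel T) (C : {set T}) : R :=
  let m2 : R := 2 * (nedges e)%:R in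
  m2^-1 * \sum_(u in C) \sum_(v in C)
     (adj R e u v - (deg e u)%:R * (deg e v)%:R / m2).

(* In an (n-4)-regular graph 2m = n(n-4) and all degree products equal (n-4)^2, so
   n(n-4) M(C) = S - (n-4)c^2/n, where c = |C| and S counts the ordered adjacent pairs
   inside C.  Irreflexivity gives S <= c^2 - c, hence n(n-4) M(C) <= 4c^2/n - c, which
   is (4t^2 - t) n for c = tn; the two special cases are arithmetic consequences. *)
From HB Require Import structures.
From mathcomp Require Import all_boot all_order all_algebra.
From mathcomp Require Import ring lra.
Set Implicit Arguments. Unset Strict Implicit. Unset Printing Implicit Defensive.
Import Order.TTheory GRing.Theory Num.Theory.
Local Open Scope ring_scope.

Section Handshake.

Variables (T : finType) (e : rel T).
Hypotheses (e_sym : symmetric e) (e_irr : irreflexive e).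

Lemma edge_neq (u v : T) : e u v -> u != v.
Proof. by apply: contraTneq => ->; rewrite e_irr. Qed.

Lemma card_arcs_of_edge u v : e u v ->
  #|[pred p : T * T | e p.1 p.2 && ([set p.1; p.2] == [set u; v])]| = 2%N.
Proof.
move=> huv; have -> : 2%N = #|[set (u, v); (v, u)]|.
  by rewrite cards2 xpair_eqE (negbTE (edge_neq huv)).
apply: eq_card => -[a b]; rewrite !inE !xpair_eqE /=.
apply/idP/idP => [/andP [hab /eqP Eab] | /orP [] /andP [/eqP -> /eqP ->]]; last 2 first.
- by rewrite huv eqxx.
- by rewrite -e_sym huv setUC eqxx.
have: a \in [set u; v] /\ b \in [set u; v] by rewrite -Eab !inE !eqxx orbT.
move: (edge_neq hab); rewrite !inE => ab [/orP [] /eqP ea /orP [] /eqP eb].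
all: by subst a b; move: ab; rewrite ?eqxx ?orbT.
Qed.

Lemma handshake : (\sum_v deg e v = 2 * nedges e)%N.
Proof.
have -> : (\sum_v deg e v = \sum_(p | e p.1 p.2) 1)%N.
  rewrite [RHS]big_mkcond -(pair_bigA _ (fun u v => if e u v then 1 else 0)%N).
  apply: eq_bigr => u _; rewrite /deg -sum1_card big_mkcond.
  by apply: eq_bigr => v _; rewrite inE.
rewrite (partition_big (fun p : T * T => [set p.1; p.2]) (mem (edges e))) /=; last first.
  move=> [u v] /= huv; rewrite inE; apply/existsP; exists u; apply/existsP; exists v.
  by rewrite huv eqxx.
rewrite /nedges mulnC -sum_nat_const; apply: eq_bigr => A.
rewrite inE => /existsP [u /existsP [v /andP [huv /eqP ->]]].
by rewrite sum1_card card_arcs_of_edge.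
Qed.

End Handshake.

Section RegularModularity.

Variables (R : realFieldType) (T : finType) (e : rel T) (k : nat).
Hypotheses (e_sym : symmetric e) (e_irr : irreflexive e).
Hypotheses (T_gt0 : (0 < #|T|)%N) (k_gt0 : (0 < k)%N).
Hypothesis e_reg : forall v, deg e v = k.

Let n : R := #|T|%:R.

Lemma sum_adj_le (C : {set T}) :
  \sum_(u in C) \sum_(v in C) adj R e u v <= #|C|%:R ^+ 2 - #|C|%:R.
Proof.
have row_le u : u \in C -> \sum_(v in C) adj R e u v <= #|C|%:R - 1.
  move=> uC; rewrite [X in X <= _](bigD1 u) //= {1}/adj e_irr add0r.
  rewrite -sum1_card natr_sum (bigD1 u uC) /= mulr1n addrC addrK; apply: ler_sum => v _.
  by rewrite /adj; case: (e u v).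
apply: le_trans (ler_sum _ row_le) _.
by rewrite sumr_const -mulr_natr; lra.
Qed.

Lemma twice_nedges_regular : 2 * (nedges e)%:R = n * k%:R.
Proof.
rewrite -natrM -handshake // (eq_bigr (fun _ => k)) // sum_nat_const.
by rewrite natrM.
Qed.

Lemma regular_modularityE (C : {set T}) :
  n * k%:R * modularity R e C
  = \sum_(u in C) \sum_(v in C) adj R e u v - k%:R * #|C|%:R ^+ 2 / n.
Proof.
have n_neq0 : n != 0 by rewrite pnatr_eq0 -lt0n.
have k_neq0 : k%:R != 0 :> R by rewrite pnatr_eq0 -lt0n.
have row u : \sum_(v in C) (adj R e u v - (deg e u)%:R * (deg e v)%:R / (n * k%:R))
             = \sum_(v in C) adj R e u v - #|C|%:R * (k%:R / n).
  rewrite sumrB [X in _ - X](eq_bigr (fun _ => k%:R / n)) => [|v _].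
    by rewrite sumr_const [in RHS]mulr_natl.
  by rewrite !e_reg; field; rewrite n_neq0 k_neq0.
rewrite /modularity twice_nedges_regular mulrA mulfV ?mulf_neq0 // mul1r.
rewrite (eq_bigr _ (fun u _ => row u)) sumrB sumr_const -mulr_natr.
by congr (_ - _); field; rewrite n_neq0.
Qed.

Lemma regular_modularity_le (C : {set T}) :
  n * k%:R * modularity R e C <= #|C|%:R ^+ 2 - #|C|%:R - k%:R * #|C|%:R ^+ 2 / n.
Proof. by rewrite regular_modularityE lerB ?sum_adj_le. Qed.

End RegularModularity.

Theorem lemma6 (R : realFieldType) (T : finType) (e : rel T)
  (e_sym : symmetric e) (e_irr : irreflexive e)
  (n_gt4 : (4 < #|T|)%N)
  (e_reg : forall v : T, deg e v = (#|T| - 4)%N)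
  (C : {set T}) (C_nonempty : C != set0)
  (t : R) (ht : (#|C|)%:R = t * (#|T|)%:R) :
  let n : R := (#|T|)%:R in
  [/\ n * (n - 4) * modularity R e C <= (4 * t ^+ 2 - t) * n,
      ((#|C|)%:R <= n / 4 -> modularity R e C <= 0)
    & (forall delta : R, 0 < delta ->
         (#|C|)%:R = (1 / 4 + delta) * n ->
         n * (n - 4) * modularity R e C <= (4 * delta ^+ 2 + delta) * n)].
Proof.
move=> n.
have n_gt4' : 4 < n by rewrite ltr_nat.
have n_gt0 : 0 < n by lra.
have T_gt0 : (0 < #|T|)%N by apply: leq_ltn_trans n_gt4.
have k_gt0 : (0 < #|T| - 4)%N by rewrite subn_gt0.
have k_eq : (#|T| - 4)%:R = n - 4 :> R by rewrite natrB // ltnW.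
have bound : n * (n - 4) * modularity R e C <= (4 * t ^+ 2 - t) * n.
  have rhs_eq : #|C|%:R ^+ 2 - #|C|%:R - (n - 4) * #|C|%:R ^+ 2 / n = (4 * t ^+ 2 - t) * n.
    by rewrite ht; field; lra.
  by rewrite -rhs_eq -k_eq; exact: regular_modularity_le.
split=> // [c_le | delta _ hc].
- have nk_gt0 : 0 < n * (n - 4) by apply: mulr_gt0; lra.
  have t_ge0 : 0 <= t by rewrite -(pmulr_lge0 _ n_gt0) -ht ler0n.
  rewrite -(pmulr_rle0 _ nk_gt0); apply: le_trans bound _.
  rewrite ht in c_le; nra.
- have t_eq : t = 1 / 4 + delta by apply: (mulIf (lt0r_neq0 n_gt0)); rewrite -ht.
  have -> : 4 * delta ^+ 2 + delta = 4 * t ^+ 2 - t by rewrite t_eq; field.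
  exact: bound.
Qed.
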